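(* Let $A$ be an approximately semi-amenable Banach algebra with a central multiplier-bounded approximate identity, and let $B$ be a Banach function algebra which has a multiplier-bounded approximate identity consisting of elements of finite support. Then the projective tensor product $A\widehat{\otimes}B$ is approximately semi-amenable.
   Context: A Banach function algebra $B$ here is a Banach algebra of complex-valued functions on a set $S$ with pointwise operations; an element has finite support if it vanishes outside a finite subset of $S$. A multiplier-bounded approximate identity of a Banach algebra $C$ is a net $(u_\alpha)$ in $C$ with $u_\alpha c\to c$ for all $c\in C$ and a constant $M$ with $\|u_\alpha c\|\le M\|c\|$ for all $\alpha,c$; it is central if each $u_\alpha$ lies in the centre of $C$. $A\widehat{\otimes}B$ is the Banach algebra with product $(a\otimes b)(a'\otimes b')=aa'\otimes bb'$. For a Banach algebra $C$ and Banach $C$-bimodule $X$, $X^*$ has the dual structure $\langle c\cdot f,x\rangle=\langle f,x\cdot c\rangle$, $\langle f\cdot c,x\rangle=\langle f,c\cdot x\rangle$; a derivation is a linear $D:C\to X^*$ with $D(cd)=c\cdot D(d)+D(c)\cdot d$; it is approximately semi-inner if there are nets $(\xi_i),(\eta_i)$ in $X^*$ with $D(c)=\lim_i(c\cdot\xi_i-\eta_i\cdot c)$ in norm for all $c$. $C$ is approximately semi-amenable if for every Banach $C$-bimodule $X$ every continuous derivation $C\to X^*$ is approximately semi-inner. *)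

From mathcomp Require Import all_boot all_order all_algebra.
From mathcomp Require Import complex.
From mathcomp Require Import all_classical all_reals all_analysis.
Import numFieldNormedType.Exports.
Import Order.TTheory GRing.Theory Num.Theory.

Set Implicit Arguments.
Unset Strict Implicit.
Unset Printing Implicit Defensive.

Local Open Scope ring_scope.
Local Open Scope classical_set_scope.

Section BanachDefs.
Context {R : realType}.
Local Notation C := (R[i]).

Definition linear_map (U V : lmodType C) (f : U -> V) : Prop :=
  (forall u u', f (u + u') = f u + f u') /\ (forall (k : C) u, f (k *: u) = k *: f u).

Definition bilinear_map (U V W : lmodType C) (f : U -> V -> W) : Prop :=
  (forall u u' v, f (u + u') v = f u v + f u' v) /\
  (forall (k : C) u v, f (k *: u) v = k *: f u v) /\
  (forall u v v', f u (v + v') = f u v + f u v') /\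
  (forall (k : C) u v, f u (k *: v) = k *: f u v).

Definition bounded_map (U V : normedModType C) (f : U -> V) : Prop :=
  exists K : C, forall u, `|f u| <= K * `|u|.

Definition banach_algebra (A : completeNormedModType C) (m : A -> A -> A) : Prop :=
  bilinear_map m /\ (forall a b c, m a (m b c) = m (m a b) c) /\
  (forall a b, `|m a b| <= `|a| * `|b|).

Definition directed (I : Type) (le : I -> I -> Prop) : Prop :=
  inhabited I /\ (forall i, le i i) /\ (forall i j k, le i j -> le j k -> le i k) /\
  (forall i j, exists k, le i k /\ le j k).

Definition mb_approx_identity (A : completeNormedModType C) (m : A -> A -> A)
    (I : Type) (le : I -> I -> Prop) (u : I -> A) : Prop :=
  (forall c (eps : C), 0 < eps ->
     exists i0, forall i, le i0 i -> `|m (u i) c - c| < eps) /\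
  (exists M : C, forall i c, `|m (u i) c| <= M * `|c|).

Definition has_central_mbai (A : completeNormedModType C) (m : A -> A -> A) : Prop :=
  exists (I : Type) (le : I -> I -> Prop) (u : I -> A),
    [/\ directed le, mb_approx_identity m le u &
        forall i d, m (u i) d = m d (u i)].

Definition banach_bimodule (A : completeNormedModType C) (m : A -> A -> A)
    (X : completeNormedModType C) (l : A -> X -> X) (r : X -> A -> X) : Prop :=
  [/\ bilinear_map l, bilinear_map r,
      (forall a b x, l (m a b) x = l a (l b x)) /\
      (forall x a b, r x (m a b) = r (r x a) b),
      (forall a x b, l a (r x b) = r (l a x) b) &
      exists K : C, forall a x, `|l a x| <= K * `|a| * `|x| /\ `|r x a| <= K * `|a| * `|x|].

Definition dual_elt (X : normedModType C) (f : X -> C) : Prop :=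
  (forall x y, f (x + y) = f x + f y) /\ (forall (k : C) x, f (k *: x) = k * f x) /\
  (exists K : C, forall x, `|f x| <= K * `|x|).

(* D : A -> X^* is a continuous derivation for the dual module structure
   <c.f, x> = f(x.c),  <f.c, x> = f(c.x). *)
Definition cont_derivation (A : completeNormedModType C) (m : A -> A -> A)
    (X : completeNormedModType C) (l : A -> X -> X) (r : X -> A -> X)
    (D : A -> X -> C) : Prop :=
  [/\ (forall c, dual_elt (D c)),
      (forall c d x, D (c + d) x = D c x + D d x),
      (forall (k : C) c x, D (k *: c) x = k * D c x),
      (exists K : C, forall c x, `|D c x| <= K * `|c| * `|x|) &
      (forall c d x, D (m c d) x = D d (r x c) + D c (l d x))].

(* D is approximately semi-inner: there are nets (xi_i), (eta_i) in X^* with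
   D(c) = lim_i (c.xi_i - eta_i.c) in the norm of X^* for all c;
   "||D c - (c.xi_i - eta_i.c)||_{X^*} <= eps eventually" is written out. *)
Definition approx_semi_inner (A : completeNormedModType C)
    (X : completeNormedModType C) (l : A -> X -> X) (r : X -> A -> X)
    (D : A -> X -> C) : Prop :=
  exists (I : Type) (le : I -> I -> Prop) (xi eta : I -> X -> C),
    [/\ directed le, (forall i, dual_elt (xi i) /\ dual_elt (eta i)) &
        forall c (eps : C), 0 < eps -> exists i0, forall i, le i0 i ->
          forall x, `|D c x - (xi i (r x c) - eta i (l c x))| <= eps * `|x|].

Definition approx_semi_amenable (A : completeNormedModType C) (m : A -> A -> A) : Prop :=
  forall (X : completeNormedModType C) (l : A -> X -> X) (r : X -> A -> X)
         (D : A -> X -> C),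
    banach_bimodule m l r -> cont_derivation m l r D -> approx_semi_inner l r D.

(* (B, m) is (isomorphic via the injective map ev to) an algebra of complex
   functions on the set S with pointwise operations. *)
Definition banach_function_algebra (B : completeNormedModType C) (m : B -> B -> B)
    (S : Type) (ev : B -> S -> C) : Prop :=
  [/\ banach_algebra m, injective ev,
      (forall f g s, ev (f + g) s = ev f s + ev g s),
      (forall (k : C) f s, ev (k *: f) s = k * ev f s) &
      (forall f g s, ev (m f g) s = ev f s * ev g s)].

Definition finite_support (B : completeNormedModType C) (S : Type)
    (ev : B -> S -> C) (f : B) : Prop :=
  finite_set [set s | ev f s != 0].

Definition has_finsupp_mbai (B : completeNormedModType C) (m : B -> B -> B)
    (S : Type) (ev : B -> S -> C) : Prop :=
  exists (I : Type) (le : I -> I -> Prop) (u : I -> B),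
    [/\ directed le, mb_approx_identity m le u & forall i, finite_support ev (u i)].

(* (T, mT, tens) is the projective tensor product A \hat\otimes B, given by its
   universal property: tens is a contractive bilinear map, every bounded
   bilinear map phi : A x B -> Y into a Banach space extends to a bounded
   linear map on T with the same bound, uniquely; and the product of T is the
   Banach algebra product with (a (x) b)(a' (x) b') = aa' (x) bb'. *)
Definition projective_tensor_product
    (A : completeNormedModType C) (mA : A -> A -> A)
    (B : completeNormedModType C) (mB : B -> B -> B)
    (T : completeNormedModType C) (mT : T -> T -> T) (tens : A -> B -> T) : Prop :=
  [/\ banach_algebra mT, bilinear_map tens,
      (forall a b, `|tens a b| <= `|a| * `|b|) /\
      (forall a b a' b', mT (tens a b) (tens a' b') = tens (mA a a') (mB b b')),
      (forall (Y : completeNormedModType C) (phi : A -> B -> Y) (M : C),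
         bilinear_map phi -> (forall a b, `|phi a b| <= M * `|a| * `|b|) ->
         exists psi : T -> Y, [/\ linear_map psi,
            (forall a b, psi (tens a b) = phi a b) &
            (forall t, `|psi t| <= M * `|t|)]) &
      (forall (Y : completeNormedModType C) (psi1 psi2 : T -> Y),
         linear_map psi1 -> linear_map psi2 -> bounded_map psi1 -> bounded_map psi2 ->
         (forall a b, psi1 (tens a b) = psi2 (tens a b)) -> psi1 = psi2)].

End BanachDefs.

(* Since D is bounded, it suffices to approximate t |-> D (t w) uniformly on
   finite sets, where w = e_i (x) u_j runs through the product of the two
   approximate identities: t w -> t holds on elementary tensors, hence on all of
   A (x) B, because the set where it holds is a closed subspace (the net is
   multiplier-bounded).  Each u_j has finite support, so it is a combination of
   idempotents p that are indicators of fibres of points x of S; as b p = b(x) p,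
   right multiplication by e_i (x) p maps A (x) B into A (x) p.  Since
   a |-> a (x) p is multiplicative, approximate semi-amenability of A applied to
   the derivation a |-> D (a (x) p) approximates D on A (x) p, and centrality of
   e_i lets e_i (x) p pass to the left of t in the module action. *)

From Pilot Require Import Defs.
From HB Require Import structures.
From mathcomp Require Import all_boot all_order all_algebra.
From mathcomp Require Import complex.
From mathcomp Require Import all_classical all_reals all_analysis.
From mathcomp Require Import ring.
Import numFieldNormedType.Exports.
Import Order.TTheory GRing.Theory Num.Theory.

Set Implicit Arguments.
Unset Strict Implicit.
Unset Printing Implicit Defensive.

Local Open Scope ring_scope.
Local Open Scope classical_set_scope.

(* The bounds in Defs carry constants in the partially ordered field R[i];
   this makes them nonnegative. *)
Lemma ler_normlM (K : numDomainType) (k a b : K) :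
  0 <= a -> 0 <= b -> a <= k * b -> a <= `|k| * b.
Proof.
move=> a0 b0 akb; have kb0 : 0 <= k * b := le_trans a0 akb.
by rewrite -(ger0_norm b0) -normrM ger0_norm.
Qed.

Lemma exists_pos_mulr_le (K : numFieldType) (k d : K) :
  0 <= k -> 0 < d -> exists2 e, 0 < e & k * e <= d.
Proof.
move=> k0 d0; have k1 : 0 < k + 1 by rewrite ltr_wpDl.
exists (d / (k + 1)); first exact: divr_gt0.
by rewrite mulrA ler_pdivrMr // mulrC ler_pM2l // lerDl ler01.
Qed.

Section Nets.
Variables (I : Type) (le : I -> I -> Prop).
Hypothesis dir : directed le.

Lemma eventually_and (P Q : I -> Prop) :
  (exists i0, forall i, le i0 i -> P i) -> (exists i0, forall i, le i0 i -> Q i) ->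
  exists i0, forall i, le i0 i -> P i /\ Q i.
Proof.
case: dir => _ [_ [le_trans le_up]] [i1 P1] [i2 Q2]; have [k [k1 k2]] := le_up i1 i2.
by exists k => i ki; split; [apply: P1; exact: le_trans ki|apply: Q2; exact: le_trans ki].
Qed.

Lemma eventually_all (T : eqType) (P : T -> I -> Prop) (s : seq T) :
  (forall c, c \in s -> exists i0, forall i, le i0 i -> P c i) ->
  exists i0, forall i, le i0 i -> forall c, c \in s -> P c i.
Proof.
elim: s => [|c s IHs] Ps.
  by case: dir => [[i0] _]; exists i0 => i _ c; rewrite in_nil.
have [i0 Hi0] := eventually_and (Ps c (mem_head c s))
  (IHs (fun d ds => Ps d (@mem_behead _ (c :: s) d ds))).
by exists i0 => i /Hi0 [Pc Ps'] d; rewrite in_cons => /predU1P[->|/Ps'].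
Qed.

End Nets.

Lemma directed_prod I J (le1 : I -> I -> Prop) (le2 : J -> J -> Prop) :
  directed le1 -> directed le2 ->
  directed (fun p q : I * J => le1 p.1 q.1 /\ le2 p.2 q.2).
Proof.
move=> [[i0] [r1 [t1 u1]]] [[j0] [r2 [t2 u2]]].
split; first exact: inhabits (i0, j0).
split; first by move=> p; split.
split; first by move=> p q s [? ?] [? ?]; split; [exact: (t1 _ q.1)|exact: (t2 _ q.2)].
move=> p q; have [k1 [? ?]] := u1 p.1 q.1; have [k2 [? ?]] := u2 p.2 q.2.
by exists (k1, k2).
Qed.

Section Linear.
Context {R : realType}.
Local Notation C := R[i].

Section Bilinear.
Variables (U V W : lmodType C) (f : U -> V -> W).
Hypothesis hf : bilinear_map f.

Lemma bilDl u u' v : f (u + u') v = f u v + f u' v. Proof. by case: hf. Qed.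
Lemma bilZl k u v : f (k *: u) v = k *: f u v. Proof. by case: hf => _ []. Qed.
Lemma bilDr u v v' : f u (v + v') = f u v + f u v'. Proof. by case: hf => _ [_ []]. Qed.
Lemma bilZr k u v : f u (k *: v) = k *: f u v. Proof. by case: hf => _ [_ []]. Qed.
Lemma bil0r u : f u 0 = 0. Proof. by rewrite -(scale0r (0 : V)) bilZr scale0r. Qed.
Lemma bilBl u u' v : f (u - u') v = f u v - f u' v.
Proof. by rewrite bilDl -scaleN1r bilZl scaleN1r. Qed.
Lemma bilBr u v v' : f u (v - v') = f u v - f u v'.
Proof. by rewrite bilDr -scaleN1r bilZr scaleN1r. Qed.

Lemma bilinear_linl v : linear_map (f^~ v).
Proof. by split => *; [exact: bilDl|exact: bilZl]. Qed.
Lemma bilinear_linr u : linear_map (f u).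
Proof. by split => *; [exact: bilDr|exact: bilZr]. Qed.

End Bilinear.

Lemma dual_elt_bound (X : normedModType C) (f : X -> C) : dual_elt f ->
  exists2 K : C, 0 <= K & forall x, `|f x| <= K * `|x|.
Proof. by case=> _ [_ [K HK]]; exists `|K| => // x; apply: ler_normlM. Qed.

Section DualElt.
Variable X : normedModType C.

Lemma dual_elt0 : dual_elt (fun _ : X => 0 : C).
Proof.
split; first by move=> *; rewrite addr0.
split; first by move=> *; rewrite mulr0.
by exists 0 => x; rewrite normr0 mul0r.
Qed.

Lemma dual_eltD (f g : X -> C) : dual_elt f -> dual_elt g -> dual_elt (fun x => f x + g x).
Proof.
move=> hf hg; have [Kf _ Hf] := dual_elt_bound hf; have [Kg _ Hg] := dual_elt_bound hg.
case: hf => fD [fZ _]; case: hg => gD [gZ _].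
split; first by move=> x y; rewrite fD gD; ring.
split; first by move=> k x; rewrite fZ gZ; ring.
exists (Kf + Kg) => x; rewrite mulrDl; apply: le_trans (ler_normD _ _) _.
exact: lerD.
Qed.

Lemma dual_eltZ (k : C) (f : X -> C) : dual_elt f -> dual_elt (fun x => k * f x).
Proof.
move=> hf; have [Kf _ Hf] := dual_elt_bound hf; case: hf => fD [fZ _].
split; first by move=> x y; rewrite fD; ring.
split; first by move=> l x; rewrite fZ; ring.
by exists (`|k| * Kf) => x; rewrite normrM -mulrA ler_wpM2l.
Qed.

Lemma dual_elt_comp (Y : normedModType C) (f : Y -> C) (g : X -> Y) :
  dual_elt f -> linear_map g -> bounded_map g -> dual_elt (f \o g).
Proof.
move=> hf [gD gZ] [Kg Hg]; have [Kf Kf0 Hf] := dual_elt_bound hf.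
case: hf => fD [fZ _].
split; first by move=> x y /=; rewrite gD fD.
split; first by move=> k x /=; rewrite gZ fZ.
by exists (Kf * Kg) => x /=; rewrite -mulrA (le_trans (Hf _)) ?ler_wpM2l.
Qed.

End DualElt.
End Linear.

Record closed_subspace {R : realType} (V : normedModType R[i]) := ClosedSubspace {
  csp_mem : V -> Prop;
  csp_mem0 : csp_mem 0;
  csp_memD : forall x y, csp_mem x -> csp_mem y -> csp_mem (x + y);
  csp_memZ : forall (k : R[i]) x, csp_mem x -> csp_mem (k *: x);
  csp_closed : forall t, (forall d : R[i], 0 < d -> exists2 y, csp_mem y & `|t - y| < d) ->
    csp_mem t }.

Section ClosedSubspace.
Context {R : realType} (V : completeNormedModType R[i]) (Q : closed_subspace V).
Local Notation P := (csp_mem Q).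

Record csp_type := CspElt { csp_val : V; csp_valP : P csp_val }.

HB.instance Definition _ := gen_eqMixin csp_type.
HB.instance Definition _ := gen_choiceMixin csp_type.

Lemma csp_val_inj : injective csp_val.
Proof. by move=> [x px] [y py] /= exy; subst y; congr CspElt; exact: Prop_irrelevance. Qed.

Lemma csp_memN x : P x -> P (- x).
Proof. by move=> px; rewrite -scaleN1r; exact: csp_memZ. Qed.

Definition csp_zero := CspElt (csp_mem0 Q).
Definition csp_add (x y : csp_type) := CspElt (csp_memD (csp_valP x) (csp_valP y)).
Definition csp_opp (x : csp_type) := CspElt (csp_memN (csp_valP x)).
Definition csp_scale (k : R[i]) (x : csp_type) := CspElt (csp_memZ k (csp_valP x)).

Lemma csp_addA : associative csp_add.
Proof. by move=> x y z; apply: csp_val_inj; rewrite /= addrA. Qed.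
Lemma csp_addC : commutative csp_add.
Proof. by move=> x y; apply: csp_val_inj; rewrite /= addrC. Qed.
Lemma csp_add0 : left_id csp_zero csp_add.
Proof. by move=> x; apply: csp_val_inj; rewrite /= add0r. Qed.
Lemma csp_addN : left_inverse csp_zero csp_opp csp_add.
Proof. by move=> x; apply: csp_val_inj; rewrite /= addNr. Qed.

HB.instance Definition _ :=
  GRing.isZmodule.Build csp_type csp_addA csp_addC csp_add0 csp_addN.

Lemma csp_scaleA a b v : csp_scale a (csp_scale b v) = csp_scale (a * b) v.
Proof. by apply: csp_val_inj; rewrite /= scalerA. Qed.
Lemma csp_scale1 : left_id 1 csp_scale.
Proof. by move=> x; apply: csp_val_inj; rewrite /= scale1r. Qed.
Lemma csp_scaleDr : right_distributive csp_scale +%R.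
Proof. by move=> a x y; apply: csp_val_inj; rewrite /= scalerDr. Qed.
Lemma csp_scaleDl v : {morph csp_scale^~ v : a b / a + b}.
Proof. by move=> a b; apply: csp_val_inj; rewrite /= scalerDl. Qed.

HB.instance Definition _ := GRing.Zmodule_isLmodule.Build R[i] csp_type
  csp_scaleA csp_scale1 csp_scaleDr csp_scaleDl.

Definition csp_norm (x : csp_type) := `|csp_val x|.

Lemma csp_normD x y : csp_norm (x + y) <= csp_norm x + csp_norm y.
Proof. exact: ler_normD. Qed.
Lemma csp_normZ (k : R[i]) x : csp_norm (k *: x) = `|k| * csp_norm x.
Proof. exact: normrZ. Qed.
Lemma csp_norm0 x : csp_norm x = 0 -> x = 0.
Proof. by move=> /normr0_eq0 x0; apply: csp_val_inj. Qed.

HB.instance Definition _ :=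
  Lmodule_isNormed.Build R[i] csp_type csp_normD csp_normZ csp_norm0.

Lemma csp_normE (x : csp_type) : `|x| = `|csp_val x|.
Proof. by []. Qed.

Lemma csp_type_complete (F : set_system csp_type) : ProperFilter F -> cauchy F -> cvg F.
Proof.
move=> FF /cauchyP Fc.
have /cauchy_cvg valF : cauchy (csp_val @ F).
  apply/cauchy_exP => e e0; have [x Fx] := Fc e e0; exists (csp_val x).
  by move: Fx => /=; apply: filterS => y; rewrite -!ball_normE /ball_.
set t := lim (csp_val @ F) in valF.
have Pt : P t.
  apply: csp_closed => d d0; move/fcvgrPdist_lt : valF => /(_ d d0) Fd.
  by have [z /= zd] := @filter_ex _ F _ _ Fd; exists (csp_val z) => //; exact: csp_valP.
apply: (cvgP (CspElt Pt)); apply/(@fcvgrPdist_lt _ csp_type F _ (CspElt Pt)) => d d0.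
exact: (proj1 (@cvgrPdist_lt _ V _ F _ csp_val t) valF d d0).
Qed.

HB.instance Definition _ := Uniform_isComplete.Build csp_type csp_type_complete.

End ClosedSubspace.

Section Derivations.
Context {R : realType}.
Local Notation C := R[i].

Lemma bounded_map_nonneg (U V : normedModType C) (f : U -> V) : bounded_map f ->
  exists2 K : C, 0 <= K & forall u, `|f u| <= K * `|u|.
Proof. by case=> K HK; exists `|K| => // u; apply: ler_normlM. Qed.

Lemma mb_approx_identity_bound (A : completeNormedModType C) (m : A -> A -> A)
    I (le : I -> I -> Prop) (e : I -> A) :
  mb_approx_identity m le e -> exists2 M, 0 <= M & forall i c, `|m (e i) c| <= M * `|c|.
Proof. by case=> _ [M HM]; exists `|M| => // i c; apply: ler_normlM. Qed.

Section Bimodule.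
Variables (T X : completeNormedModType C) (mT : T -> T -> T).
Variables (l : T -> X -> X) (r : X -> T -> X).
Hypothesis hX : banach_bimodule mT l r.

Lemma bimodule_bound : exists2 K : C, 0 <= K &
  forall a x, `|l a x| <= K * `|a| * `|x| /\ `|r x a| <= K * `|a| * `|x|.
Proof.
case: hX => _ _ _ _ [K HK]; exists `|K| => // a x; have [la ra] := HK a x.
by split; rewrite -mulrA; apply: ler_normlM; rewrite ?mulr_ge0 ?mulrA.
Qed.

Variable D : T -> X -> C.
Hypothesis hD : cont_derivation mT l r D.

Lemma derivation_bound : exists2 K : C, 0 <= K &
  forall c x, `|D c x| <= K * `|c| * `|x|.
Proof.
case: hD => _ _ _ [K HK] _; exists `|K| => // c x.
by rewrite -mulrA; apply: ler_normlM; rewrite ?mulr_ge0 ?mulrA ?HK.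
Qed.

Lemma derivationD c d x : D (c + d) x = D c x + D d x. Proof. by case: hD. Qed.
Lemma derivationZ k c x : D (k *: c) x = k * D c x. Proof. by case: hD. Qed.
Lemma derivation0 x : D 0 x = 0.
Proof. by rewrite -(scale0r (0 : T)) derivationZ mul0r. Qed.
Lemma derivationB c d x : D (c - d) x = D c x - D d x.
Proof. by rewrite derivationD -scaleN1r derivationZ mulN1r. Qed.

End Bimodule.

Section Pullback.
Variables (A T X : completeNormedModType C) (mA : A -> A -> A) (mT : T -> T -> T).
Variables (l : T -> X -> X) (r : X -> T -> X) (D : T -> X -> C) (j : A -> T).
Hypotheses (j_lin : linear_map j) (j_bd : bounded_map j).
Hypothesis jM : forall a b, j (mA a b) = mT (j a) (j b).
Hypothesis hX : banach_bimodule mT l r.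

Lemma banach_bimodule_pullback :
  banach_bimodule mA (fun a x => l (j a) x) (fun x a => r x (j a)).
Proof.
have [K K0 HK] := bimodule_bound hX; have [Kj _ HKj] := bounded_map_nonneg j_bd.
case: j_lin => jD jZ; case: hX => l_bil r_bil [l_assoc r_assoc] lr_mid _.
split.
- split; first by move=> *; rewrite jD (bilDl l_bil).
  split; first by move=> *; rewrite jZ (bilZl l_bil).
  by split=> *; [exact: (bilDr l_bil)|exact: (bilZr l_bil)].
- split; first by move=> *; exact: (bilDl r_bil).
  split; first by move=> *; exact: (bilZl r_bil).
  by split=> *; [rewrite jD (bilDr r_bil)|rewrite jZ (bilZr r_bil)].
- by split=> *; rewrite jM ?l_assoc ?r_assoc.
- by move=> *; exact: lr_mid.
exists (K * Kj) => a x; have [la ra] := HK (j a) x.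
have bd : K * `|j a| * `|x| <= K * Kj * `|a| * `|x|.
  by apply: ler_wpM2r => //; rewrite -mulrA; apply: ler_wpM2l.
by split; apply: le_trans bd.
Qed.

Hypothesis hD : cont_derivation mT l r D.

Lemma cont_derivation_pullback :
  cont_derivation mA (fun a x => l (j a) x) (fun x a => r x (j a)) (fun a => D (j a)).
Proof.
have [K K0 HK] := derivation_bound hD; have [Kj _ HKj] := bounded_map_nonneg j_bd.
case: j_lin => jD jZ; case: hD => D_dual _ _ _ D_der.
split.
- by move=> c; exact: D_dual.
- by move=> *; rewrite jD (derivationD hD).
- by move=> *; rewrite jZ (derivationZ hD).
- exists (K * Kj) => c x; apply: le_trans (HK _ _) _.
  apply: ler_wpM2r => //; rewrite -mulrA; exact: ler_wpM2l.
- by move=> *; rewrite jM D_der.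
Qed.

Lemma approx_semi_inner_pullback : approx_semi_amenable mA ->
  approx_semi_inner (fun a x => l (j a) x) (fun x a => r x (j a)) (fun a => D (j a)).
Proof.
by move=> asA; apply: asA; [exact: banach_bimodule_pullback|exact: cont_derivation_pullback].
Qed.

End Pullback.
End Derivations.

Section ApproxFixed.
Context {R : realType}.
Local Notation C := R[i].
Variables (V : completeNormedModType C) (I : Type) (le : I -> I -> Prop).
Variable L : I -> V -> V.
Hypotheses (dir : directed le) (L_lin : forall i, linear_map (L i)).
Hypothesis L_bd : exists2 M : C, 0 <= M & forall i v, `|L i v| <= M * `|v|.

Definition approx_fixed (v : V) : Prop :=
  forall d : C, 0 < d -> exists i0, forall i, le i0 i -> `|v - L i v| <= d.

Lemma approx_fixed0 : approx_fixed 0.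
Proof.
move=> d d0; case: dir => [[i0] _]; exists i0 => i _.
have [_ LZ] := L_lin i.
by rewrite -(scale0r (0 : V)) LZ !scale0r subr0 normr0 ltW.
Qed.

Lemma approx_fixedD v w : approx_fixed v -> approx_fixed w -> approx_fixed (v + w).
Proof.
move=> Fv Fw d d0; have d20 : 0 < d / 2 by rewrite divr_gt0.
have [i0 Hi0] := eventually_and dir (Fv _ d20) (Fw _ d20).
exists i0 => i /Hi0 [Hv Hw]; have [LD _] := L_lin i.
rewrite LD opprD addrACA [d]splitr; apply: le_trans (ler_normD _ _) _.
exact: lerD.
Qed.

Lemma approx_fixedZ (k : C) v : approx_fixed v -> approx_fixed (k *: v).
Proof.
move=> Fv d d0; have [e e0 ke] := exists_pos_mulr_le (normr_ge0 k) d0.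
have [i0 Hi0] := Fv e e0; exists i0 => i /Hi0 Hv; have [_ LZ] := L_lin i.
by rewrite LZ -scalerBr normrZ (le_trans _ ke) ?ler_wpM2l.
Qed.

Lemma approx_fixed_closed v :
  (forall d : C, 0 < d -> exists2 w, approx_fixed w & `|v - w| < d) -> approx_fixed v.
Proof.
move=> clv d d0; have [M M0 HM] := L_bd.
have [e e0 Me] := exists_pos_mulr_le (addr_ge0 M0 (ler0n _ 2)) d0.
have [w Fw vw] := clv e e0; have [i0 Hi0] := Fw e e0.
exists i0 => i /Hi0 Hw; have [LD LZ] := L_lin i.
have LB : L i (w - v) = L i w - L i v by rewrite LD -scaleN1r LZ scaleN1r.
have -> : v - L i v = (v - w) + (w - L i w) + L i (w - v).
  by rewrite LB !addrA subrK addrNK.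
apply: le_trans (ler_normD _ _) _; apply: le_trans Me.
rewrite mulrDl [M * e + _]addrC mulr_natl mulr2n.
apply: lerD; first by apply: le_trans (ler_normD _ _) _; apply: lerD => //; exact: ltW.
by apply: le_trans (HM i _) _; rewrite distrC ler_wpM2l // ltW.
Qed.

Definition approx_fixed_subspace : closed_subspace V :=
  ClosedSubspace approx_fixed0 approx_fixedD approx_fixedZ approx_fixed_closed.

End ApproxFixed.

Section FinitelyApproxInner.
Context {R : realType}.
Local Notation C := R[i].
Variables (T X : completeNormedModType C) (mT : T -> T -> T).
Variables (l : T -> X -> X) (r : X -> T -> X) (D : T -> X -> C).
Hypothesis hD : cont_derivation mT l r D.

Definition finitely_approx_inner (f : T -> T) : Prop :=
  forall (cs : seq T) (eps : C), 0 < eps -> exists xi eta : X -> C,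
    [/\ dual_elt xi, dual_elt eta & forall t, t \in cs -> forall x,
      `|D (f t) x - (xi (r x t) - eta (l t x))| <= eps * `|x|].

Lemma finitely_approx_inner0 : finitely_approx_inner (fun _ => 0).
Proof.
move=> cs eps eps0; exists (fun _ => 0), (fun _ => 0).
split; [exact: dual_elt0|exact: dual_elt0|] => t _ x.
by rewrite /= (derivation0 hD) !subrr normr0 mulr_ge0 // ltW.
Qed.

Lemma finitely_approx_innerD f g : finitely_approx_inner f -> finitely_approx_inner g ->
  finitely_approx_inner (fun t => f t + g t).
Proof.
move=> Af Ag cs eps eps0; have eps20 : 0 < eps / 2 by rewrite divr_gt0.
have [xf [ef [dxf def Hf]]] := Af cs _ eps20.
have [xg [eg [dxg deg Hg]]] := Ag cs _ eps20.
exists (fun y => xf y + xg y), (fun y => ef y + eg y).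
split; [exact: dual_eltD|exact: dual_eltD|] => t tcs x.
rewrite (derivationD hD).
set a := D (f t) x; set b := D (g t) x.
have -> : a + b - (xf (r x t) + xg (r x t) - (ef (l t x) + eg (l t x))) =
  (a - (xf (r x t) - ef (l t x))) + (b - (xg (r x t) - eg (l t x))) by ring.
rewrite [eps]splitr mulrDl; apply: le_trans (ler_normD _ _) _.
by apply: lerD; [exact: Hf|exact: Hg].
Qed.

Lemma finitely_approx_innerZ k f : finitely_approx_inner f ->
  finitely_approx_inner (fun t => k *: f t).
Proof.
move=> Af cs eps eps0; have [e e0 ke] := exists_pos_mulr_le (normr_ge0 k) eps0.
have [xi [eta [dxi deta H]]] := Af cs e e0.
exists (fun y => k * xi y), (fun y => k * eta y).
split; [exact: dual_eltZ|exact: dual_eltZ|] => t tcs x.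
rewrite /= (derivationZ hD) -!mulrBr normrM.
apply: le_trans (ler_wpM2l (normr_ge0 k) (H t tcs x)) _.
by rewrite mulrA ler_wpM2r.
Qed.

Lemma finitely_approx_inner_lim (I : Type) (le : I -> I -> Prop) (F : I -> T -> T) :
  directed le -> (forall t, approx_fixed le F t) ->
  (forall i, finitely_approx_inner (F i)) -> finitely_approx_inner id.
Proof.
move=> dir Fid AF cs eps eps0; have [KD KD0 HKD] := derivation_bound hD.
have eps20 : 0 < eps / 2 by rewrite divr_gt0.
have [d d0 KDd] := exists_pos_mulr_le KD0 eps20.
have [i0 Hi0] := eventually_all (P := fun t i => `|t - F i t| <= d) (s := cs) dir
  (fun t _ => Fid t d d0).
have [_ [le_refl _]] := dir.
have [xi [eta [dxi deta H]]] := AF i0 cs _ eps20.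
exists xi, eta; split => // t tcs x /=.
have -> : D t x - (xi (r x t) - eta (l t x)) =
   D (t - F i0 t) x + (D (F i0 t) x - (xi (r x t) - eta (l t x))).
  by rewrite (derivationB hD); ring.
rewrite [eps]splitr mulrDl; apply: le_trans (ler_normD _ _) _.
apply: lerD; last exact: H.
apply: le_trans (HKD _ _) _; apply: ler_wpM2r => //; apply: le_trans KDd.
exact/ler_wpM2l/(Hi0 _ (le_refl i0)).
Qed.

Lemma approx_semi_inner_of_finitely : finitely_approx_inner id -> approx_semi_inner l r D.
Proof.
move=> AD; pose I := (seq T * {e : C | 0 < e})%type.
pose le (i j : I) := {subset i.1 <= j.1} /\ sval j.2 <= sval i.2.
have pickI (i : I) : exists p : (X -> C) * (X -> C),
  [/\ dual_elt p.1, dual_elt p.2 & forall t, t \in i.1 -> forall x,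
    `|D t x - (p.1 (r x t) - p.2 (l t x))| <= sval i.2 * `|x|].
  by case: i => cs [e e0]; have [xi [eta Hxe]] := AD cs e e0; exists (xi, eta).
have [f Hf] := choice pickI.
exists I, le, (fun i => (f i).1), (fun i => (f i).2); split.
- split; first exact: (inhabits ([::], exist _ 1 ltr01)).
  split; first by move=> i; split.
  split; first by move=> i j k [s1 l1] [s2 l2]; split; [move=> y /s1 /s2|exact: le_trans l2 l1].
  move=> [cs1 [e1 p1]] [cs2 [e2 p2]].
  have [e e0 [ee1 ee2]] : exists2 e : C, 0 < e & e <= e1 /\ e <= e2.
    have /orP[e12|e21] := real_leVge (gtr0_real p1) (gtr0_real p2).
    + by exists e1; rewrite ?lexx.
    + by exists e2; rewrite ?lexx.
  by exists (cs1 ++ cs2, exist _ e e0); split; split => //= y yc;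
    rewrite mem_cat yc ?orbT.
- by move=> i; have [] := Hf i.
- move=> c eps eps0; exists ([:: c], exist _ eps eps0) => i [sub le_e] x.
  have [_ _ H] := Hf i; apply: le_trans (H c (sub c (mem_head _ _)) x) _.
  exact: ler_wpM2r.
Qed.

End FinitelyApproxInner.

Section FunctionAlgebra.
Context {R : realType}.
Local Notation C := R[i].
Variables (B : completeNormedModType C) (mB : B -> B -> B) (S : Type) (ev : B -> S -> C).
Hypothesis hB : banach_function_algebra mB ev.

Lemma evD f g s : ev (f + g) s = ev f s + ev g s. Proof. by case: hB. Qed.
Lemma evZ k f s : ev (k *: f) s = k * ev f s. Proof. by case: hB. Qed.
Lemma evM f g s : ev (mB f g) s = ev f s * ev g s. Proof. by case: hB. Qed.
Lemma ev_inj f g : (forall s, ev f s = ev g s) -> f = g.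
Proof. by case: hB => _ inj _ _ _ fg; apply/inj/funext. Qed.
Lemma ev0 s : ev 0 s = 0. Proof. by rewrite -(scale0r (0 : B)) evZ mul0r. Qed.
Lemma evB f g s : ev (f - g) s = ev f s - ev g s.
Proof. by rewrite evD -scaleN1r evZ mulN1r. Qed.

Lemma mulBC f g : mB f g = mB g f.
Proof. by apply: ev_inj => s; rewrite !evM mulrC. Qed.

Definition ev_equiv (s x : S) : Prop := forall b, ev b s = ev b x.

Definition point_idempotent (p : B) (x : S) : Prop :=
  forall s, ev p s = if `[< ev_equiv s x >] then 1 else 0.

Lemma exists_separating (x : S) (v : B) (xs : nat -> S) (n : nat) :
  exists g : B, [/\ ev g x = ev v x, (forall s, ev v s = 0 -> ev g s = 0) &
    forall k, (k < n)%N -> ~ ev_equiv (xs k) x -> ev g (xs k) = 0].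
Proof.
elim: n => [|n [g [gx gv gk]]]; first by exists v.
have [exn|nexn] := pselect (ev_equiv (xs n) x).
  by exists g; split => // k; rewrite ltnS leq_eqVlt => /predU1P[->|/gk].
have [b bxn] : exists b, ev b (xs n) <> ev b x by apply/existsNP.
have dne : ev b x - ev b (xs n) != 0 by rewrite subr_eq0; apply/eqP => /esym.
pose h := (ev b x - ev b (xs n))^-1 *: (mB g b - ev b (xs n) *: g).
have evh s : ev h s = ev g s * ((ev b s - ev b (xs n)) / (ev b x - ev b (xs n))).
  by rewrite evZ evB evM evZ; ring.
exists h; split.
- by rewrite evh divff // mulr1.
- by move=> s vs; rewrite evh gv // mul0r.
- move=> k; rewrite ltnS leq_eqVlt => /predU1P[->|kn] nk; rewrite evh.
    by rewrite subrr mul0r mulr0.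
  by rewrite gk // mul0r.
Qed.

Lemma exists_point_idempotent (u : B) (x : S) (n : nat) (xs : nat -> S) :
  (forall s, ev u s != 0 -> exists2 k, (k < n)%N & s = xs k) ->
  ev u x != 0 -> exists p, point_idempotent p x.
Proof.
move=> cov ux; have [g [gx gv gk]] := exists_separating x ((ev u x)^-1 *: u) xs n.
exists g => s; case: asboolP => [sx|nsx]; first by rewrite (sx g) gx evZ mulVf.
have [us|us] := eqVneq (ev u s) 0; first by apply: gv; rewrite evZ us mulr0.
by have [k kn sk] := cov s us; rewrite sk gk // -sk.
Qed.

Section PointIdempotent.
Variables (p : B) (x : S).
Hypothesis px : point_idempotent p x.

Lemma point_idempotent_at : ev p x = 1.
Proof. by rewrite px; case: asboolP => // -[]. Qed.

Lemma mul_point_idempotent b : mB b p = ev b x *: p.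
Proof.
apply: ev_inj => s; rewrite evM evZ px.
by case: asboolP => [->|_]; rewrite ?mulr0.
Qed.

Lemma point_idempotentK : mB p p = p.
Proof. by rewrite mul_point_idempotent point_idempotent_at scale1r. Qed.

Lemma norm_ev_le b : `|ev b x| <= `|b|.
Proof.
have p0 : 0 < `|p|.
  rewrite normr_gt0; apply: contra_neq (oner_neq0 C) => p0.
  by rewrite -point_idempotent_at p0 ev0.
rewrite -(ler_pM2r p0) -normrZ -mul_point_idempotent.
by case: hB => -[_ [_ mB_norm]] _ _ _ _; exact: mB_norm.
Qed.

End PointIdempotent.

Lemma support_set0_eq0 (u : B) : [set s | ev u s != 0] = set0 -> u = 0.
Proof.
move=> supp0; apply: ev_inj => s; rewrite ev0; have [//|us] := eqVneq (ev u s) 0.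
by have : [set s | ev u s != 0] s by []; rewrite supp0.
Qed.

Section PointIdempotentSpan.
Variable P : B -> Prop.
Hypotheses (P0 : P 0) (PD : forall u v, P u -> P v -> P (u + v)).
Hypothesis Pp : forall k p x, point_idempotent p x -> P (k *: p).

(* Subtracting [ev u (xs n) *: p] for the point idempotent [p] at [xs n] kills
   [u] on the whole fibre of [xs n]. *)
Lemma point_idempotent_span_cover n (xs : nat -> S) u :
  (forall s, ev u s != 0 -> exists2 k, (k < n)%N & s = xs k) -> P u.
Proof.
elim: n u => [|n IHn] u cov.
  by rewrite (@support_set0_eq0 u) // -subset0 => s /cov [].
have [uxn|uxn] := eqVneq (ev u (xs n)) 0.
  apply: IHn => s /[dup] us /cov [k]; rewrite ltnS leq_eqVlt.
  by case/predU1P => [-> sxn|kn ->]; [rewrite sxn uxn eqxx in us|exists k].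
have [p pxn] := exists_point_idempotent cov uxn.
have -> : u = (u - ev u (xs n) *: p) + ev u (xs n) *: p by rewrite subrK.
apply: PD (Pp _ pxn); apply: IHn => s.
rewrite evB evZ pxn; case: asboolP => [sxn|nsxn].
  by rewrite (sxn u) mulr1 subrr eqxx.
rewrite mulr0 subr0 => /cov [k]; rewrite ltnS leq_eqVlt.
case/predU1P => [->|kn ->]; last by exists k.
by move=> sxn; case: nsxn; rewrite sxn.
Qed.

Lemma finite_support_ind u : Defs.finite_support ev u -> P u.
Proof.
move=> /finite_set_leP[n /pfcard_geP[/support_set0_eq0 -> //|[xs]]].
apply: (@point_idempotent_span_cover n xs) => s us.
have : [set s | ev u s != 0] s by [].
by move=> /('surj_xs) [k kn <-]; exists k.
Qed.

End PointIdempotentSpan.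
End FunctionAlgebra.

Section ProjectiveTensor.
Context {R : realType}.
Local Notation C := R[i].
Variables (A B T : completeNormedModType C).
Variables (mA : A -> A -> A) (mB : B -> B -> B) (mT : T -> T -> T) (tens : A -> B -> T).
Hypothesis hT : projective_tensor_product mA mB mT tens.

Lemma mulT_bilinear : bilinear_map mT. Proof. by case: hT => -[]. Qed.
Lemma mulT_norm s t : `|mT s t| <= `|s| * `|t|. Proof. by case: hT => -[_ []]. Qed.
Lemma tens_bilinear : bilinear_map tens. Proof. by case: hT. Qed.
Lemma tens_norm a b : `|tens a b| <= `|a| * `|b|. Proof. by case: hT => _ _ []. Qed.
Lemma mulT_tens a b a' b' : mT (tens a b) (tens a' b') = tens (mA a a') (mB b b').
Proof. by case: hT => _ _ []. Qed.

Lemma tensor_ext (Y : completeNormedModType C) (phi : A -> B -> Y) (M : C) :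
  bilinear_map phi -> (forall a b, `|phi a b| <= M * `|a| * `|b|) ->
  exists psi : T -> Y, [/\ linear_map psi, (forall a b, psi (tens a b) = phi a b) &
    forall t, `|psi t| <= M * `|t|].
Proof. by case: hT => _ _ _ ext _; exact: ext. Qed.

Lemma tensor_uniq (Y : completeNormedModType C) (psi1 psi2 : T -> Y) :
  linear_map psi1 -> linear_map psi2 -> bounded_map psi1 -> bounded_map psi2 ->
  (forall a b, psi1 (tens a b) = psi2 (tens a b)) -> psi1 = psi2.
Proof. by case: hT => _ _ _ _ uniq; exact: uniq. Qed.

Lemma mulT_bounded_l w : bounded_map (mT ^~ w).
Proof. by exists `|w| => t; rewrite mulrC mulT_norm. Qed.

Lemma tensor_bound (Y : completeNormedModType C) (psi : T -> Y) (phi : A -> B -> Y) M :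
  linear_map psi -> bounded_map psi -> bilinear_map phi ->
  (forall a b, `|phi a b| <= M * `|a| * `|b|) ->
  (forall a b, psi (tens a b) = phi a b) -> forall t, `|psi t| <= M * `|t|.
Proof.
move=> psi_lin psi_bd phi_bil phiM psi_phi.
have [psi' [psi'_lin psi'_phi psi'M]] := tensor_ext phi_bil phiM.
have -> : psi = psi'.
  apply: tensor_uniq => // [|a b]; last by rewrite psi_phi psi'_phi.
  by exists M.
exact: psi'M.
Qed.

(* The universal property maps [T] into any closed subspace containing the
   elementary tensors; by uniqueness this map is the identity. *)
Lemma tensor_closed_subspace_full (Q : closed_subspace T) :
  (forall a b, csp_mem Q (tens a b)) -> forall t, csp_mem Q t.
Proof.
move=> Qtens t; pose phi a b : csp_type Q := CspElt (Qtens a b).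
have phi_bil : bilinear_map phi.
  have tens_bil := tens_bilinear.
  split; first by move=> *; apply: csp_val_inj; rewrite /= (bilDl tens_bil).
  split; first by move=> *; apply: csp_val_inj; rewrite /= (bilZl tens_bil).
  split; first by move=> *; apply: csp_val_inj; rewrite /= (bilDr tens_bil).
  by move=> *; apply: csp_val_inj; rewrite /= (bilZr tens_bil).
have [|psi [[psiD psiZ] psi_phi psi_bd]] := tensor_ext phi_bil (M := 1).
  by move=> a b; rewrite mul1r csp_normE; exact: tens_norm.
suff psiK : (fun t => csp_val (psi t)) = id.
  by have /= <- := congr1 (@^~ t) psiK; exact: csp_valP.
apply: tensor_uniq => //.
- by split => *; rewrite ?psiD ?psiZ.
- by exists 1 => u; rewrite -csp_normE.
- by exists 1 => u; rewrite mul1r.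
- by move=> a b; rewrite psi_phi.
Qed.

Hypotheses (mA_bil : bilinear_map mA) (mB_bil : bilinear_map mB).

Lemma mulT_tens_bound e f (M1 M2 : C) :
  (forall a, `|mA a e| <= M1 * `|a|) -> (forall b, `|mB b f| <= M2 * `|b|) ->
  forall t, `|mT t (tens e f)| <= M1 * M2 * `|t|.
Proof.
move=> eM fM; have tens_bil := tens_bilinear.
apply: (tensor_bound (phi := fun a b => tens (mA a e) (mB b f))).
- exact: (bilinear_linl mulT_bilinear).
- exact: mulT_bounded_l.
- split; first by move=> *; rewrite (bilDl mA_bil) (bilDl tens_bil).
  split; first by move=> *; rewrite (bilZl mA_bil) (bilZl tens_bil).
  split; first by move=> *; rewrite (bilDl mB_bil) (bilDr tens_bil).
  by move=> *; rewrite (bilZl mB_bil) (bilZr tens_bil).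
- move=> a b; apply: le_trans (tens_norm _ _) _.
  have -> : M1 * M2 * `|a| * `|b| = M1 * `|a| * (M2 * `|b|) by ring.
  exact: ler_pM.
- by move=> a b; rewrite mulT_tens.
Qed.

Lemma tens_central e f :
  (forall a, mA e a = mA a e) -> (forall b, mB f b = mB b f) ->
  forall t, mT t (tens e f) = mT (tens e f) t.
Proof.
move=> eC fC t; have mT_bil := mulT_bilinear.
suff mTef : mT ^~ (tens e f) = mT (tens e f) by exact: (congr1 (@^~ t) mTef).
apply: tensor_uniq; [exact: bilinear_linl|exact: bilinear_linr|exact: mulT_bounded_l| |].
  by exists `|tens e f| => s; exact: mulT_norm.
by move=> a b; rewrite !mulT_tens eC fC.
Qed.

Lemma mulT_tens_eigen e f (lam : B -> C) (M : C) :
  (forall b b', lam (b + b') = lam b + lam b') -> (forall k b, lam (k *: b) = k * lam b) ->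
  (forall b, `|lam b| <= `|b|) -> (forall b, mB b f = lam b *: f) ->
  (forall a, `|mA a e| <= M * `|a|) ->
  exists Phi : T -> A, forall t, mT t (tens e f) = tens (Phi t) f.
Proof.
move=> lamD lamZ lam_bd fM eM; have tens_bil := tens_bilinear.
pose phi a b := lam b *: mA a e.
have phi_bil : bilinear_map phi.
  split; first by move=> *; rewrite /phi (bilDl mA_bil) scalerDr.
  split; first by move=> *; rewrite /phi (bilZl mA_bil) !scalerA mulrC.
  split; first by move=> *; rewrite /phi lamD scalerDl.
  by move=> *; rewrite /phi lamZ scalerA.
have [|psi [[psiD psiZ] psi_phi psi_bd]] := tensor_ext phi_bil (M := M).
  move=> a b; rewrite normrZ [_ * `|b|]mulrC.
  by apply: ler_pM.
exists psi; suff mTef : mT ^~ (tens e f) = (fun t => tens (psi t) f).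
  by move=> t; exact: (congr1 (@^~ t) mTef).
apply: tensor_uniq.
- exact: (bilinear_linl mulT_bilinear).
- by split => *; rewrite ?psiD ?psiZ ?(bilDl tens_bil) ?(bilZl tens_bil).
- exact: mulT_bounded_l.
- exists (M * `|f|) => t; apply: le_trans (tens_norm _ _) _.
  by rewrite mulrAC ler_wpM2r.
- by move=> a b; rewrite mulT_tens fM psi_phi (bilZr tens_bil) (bilZl tens_bil).
Qed.

End ProjectiveTensor.

Section TensorApproxSemiAmenable.
Context {R : realType}.
Local Notation C := R[i].
Variables (A B T : completeNormedModType C).
Variables (mA : A -> A -> A) (mB : B -> B -> B) (mT : T -> T -> T).
Variables (S : Type) (ev : B -> S -> C) (tens : A -> B -> T).
Hypotheses (hA : banach_algebra mA) (hB : banach_function_algebra mB ev).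
Hypothesis hT : projective_tensor_product mA mB mT tens.
Variables (IA : Type) (leA : IA -> IA -> Prop) (eA : IA -> A).
Hypotheses (dA : directed leA) (aiA : mb_approx_identity mA leA eA).
Hypothesis eA_central : forall i a, mA (eA i) a = mA a (eA i).
Variables (IB : Type) (leB : IB -> IB -> Prop) (uB : IB -> B).
Hypotheses (dB : directed leB) (aiB : mb_approx_identity mB leB uB).
Hypothesis uB_fin : forall j, Defs.finite_support ev (uB j).

Let mA_bil : bilinear_map mA. Proof. by case: hA. Qed.
Let mB_bil : bilinear_map mB. Proof. by case: hB => -[]. Qed.
Let tens_bil := tens_bilinear hT.
Let mT_bil := mulT_bilinear hT.

Let le2 (g g' : IA * IB) := leA g.1 g'.1 /\ leB g.2 g'.2.
Let w (g : IA * IB) := tens (eA g.1) (uB g.2).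

Lemma mulT_unit_bound : exists2 M : C, 0 <= M & forall g t, `|mT t (w g)| <= M * `|t|.
Proof.
have [MA MA0 HA] := mb_approx_identity_bound aiA.
have [MB MB0 HB] := mb_approx_identity_bound aiB.
exists (MA * MB); first exact: mulr_ge0.
move=> g; apply: (mulT_tens_bound hT mA_bil mB_bil) => [a|b]; first by rewrite -eA_central.
by rewrite (mulBC hB).
Qed.

Lemma approx_fixed_tens a b : approx_fixed le2 (fun g s => mT s (w g)) (tens a b).
Proof.
move=> d d0; have [MA MA0 HA] := mb_approx_identity_bound aiA.
have d20 : 0 < d / 2 by rewrite divr_gt0.
have [e1 e10 be1] := exists_pos_mulr_le (normr_ge0 b) d20.
have [e2 e20 ae2] := exists_pos_mulr_le (mulr_ge0 MA0 (normr_ge0 a)) d20.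
have [i0 Hi0] := aiA.1 a e1 e10; have [j0 Hj0] := aiB.1 b e2 e20.
exists (i0, j0) => g [/Hi0 ai /Hj0 bj]; rewrite /w (mulT_tens hT).
have -> : tens a b - tens (mA a (eA g.1)) (mB b (uB g.2)) =
    tens (a - mA (eA g.1) a) b + tens (mA (eA g.1) a) (b - mB (uB g.2) b).
  by rewrite (bilBl tens_bil) (bilBr tens_bil) -eA_central (mulBC hB b) addrA subrK.
rewrite [d]splitr; apply: le_trans (ler_normD _ _) _; apply: lerD.
  apply: le_trans (tens_norm hT _ _) _; rewrite mulrC; apply: le_trans be1.
  by rewrite ler_wpM2l // distrC ltW.
apply: le_trans (tens_norm hT _ _) _; apply: le_trans ae2.
by apply: ler_pM => //; rewrite distrC ltW.
Qed.

Lemma approx_fixed_unit t : approx_fixed le2 (fun g s => mT s (w g)) t.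
Proof.
have dir : directed le2 by exact: directed_prod.
have lin g : linear_map (fun t => mT t (w g)) by exact: bilinear_linl.
exact: (tensor_closed_subspace_full hT (Q := approx_fixed_subspace dir lin mulT_unit_bound)
  approx_fixed_tens).
Qed.

Variables (X : completeNormedModType C) (l : T -> X -> X) (r : X -> T -> X).
Variable D : T -> X -> C.
Hypotheses (hX : banach_bimodule mT l r) (hD : cont_derivation mT l r D).
Hypothesis asA : approx_semi_amenable mA.

Lemma finitely_approx_inner_point_idempotent i p x : point_idempotent ev p x ->
  finitely_approx_inner l r D (fun t => mT t (tens (eA i) p)).
Proof.
move=> px; have [MA _ HA] := mb_approx_identity_bound aiA.
have [Phi HPhi] : exists Phi : T -> A, forall t, mT t (tens (eA i) p) = tens (Phi t) p.
  apply: (@mulT_tens_eigen _ _ _ _ _ _ _ _ hT mA_bil _ _ (ev^~ x) MA).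
  - by move=> b b'; rewrite (evD hB).
  - by move=> k b; rewrite (evZ hB).
  - exact: (norm_ev_le hB px).
  - exact: (mul_point_idempotent hB px).
  - by move=> a; rewrite -eA_central.
have [I' [le' [xi [eta [dI dxe Hxe]]]]] :
    approx_semi_inner (fun a y => l (tens a p) y) (fun y a => r y (tens a p))
      (fun a => D (tens a p)).
  apply: approx_semi_inner_pullback hX hD asA.
  - exact: (bilinear_linl tens_bil).
  - by exists `|p| => a; rewrite mulrC (tens_norm hT).
  - by move=> a b; rewrite (mulT_tens hT) (point_idempotentK hB px).
case: hX => l_bil r_bil [l_assoc r_assoc] _ _; have [K _ HK] := bimodule_bound hX.
move=> cs eps eps0.
have [j Hj] := eventually_all (s := [seq Phi c | c <- cs]) dI
  (fun a _ => Hxe a eps eps0).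
exists (fun y => xi j (r y (tens (eA i) p))), (fun y => eta j (l (tens (eA i) p) y)).
split.
- apply: dual_elt_comp (dxe j).1 (bilinear_linl r_bil _) _.
  by exists (K * `|tens (eA i) p|) => y; have [] := HK (tens (eA i) p) y.
- apply: dual_elt_comp (dxe j).2 (bilinear_linr l_bil _) _.
  by exists (K * `|tens (eA i) p|) => y; have [] := HK (tens (eA i) p) y.
move=> c cin y.
rewrite -r_assoc -l_assoc -(tens_central hT (eA_central i) (mulBC hB p)) HPhi.
by have [_ [le'_refl _]] := dI; apply: Hj (le'_refl j) _ (map_f Phi cin) y.
Qed.

Lemma finitely_approx_inner_unit g : finitely_approx_inner l r D (fun t => mT t (w g)).
Proof.
pose P b := finitely_approx_inner l r D (fun t => mT t (tens (eA g.1) b)).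
apply: (finite_support_ind hB (P := P)) (uB_fin g.2) => [|b b' Pb Pb'|k p x px]; rewrite /P.
- have -> : (fun t => mT t (tens (eA g.1) 0)) = fun _ => 0.
    by apply: funext => t; rewrite (bil0r tens_bil) (bil0r mT_bil).
  exact: finitely_approx_inner0 hD.
- have -> : (fun t => mT t (tens (eA g.1) (b + b'))) =
      fun t => mT t (tens (eA g.1) b) + mT t (tens (eA g.1) b').
    by apply: funext => t; rewrite (bilDr tens_bil) (bilDr mT_bil).
  exact: (finitely_approx_innerD hD Pb Pb').
- have -> : (fun t => mT t (tens (eA g.1) (k *: p))) =
      fun t => k *: mT t (tens (eA g.1) p).
    by apply: funext => t; rewrite (bilZr tens_bil) (bilZr mT_bil).
  exact/(finitely_approx_innerZ hD)/(finitely_approx_inner_point_idempotent _ px).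
Qed.

Lemma tensor_approx_semi_inner : approx_semi_inner l r D.
Proof.
apply: approx_semi_inner_of_finitely.
apply: (finitely_approx_inner_lim hD (directed_prod dA dB)) finitely_approx_inner_unit.
exact: approx_fixed_unit.
Qed.

End TensorApproxSemiAmenable.

Theorem theorem5p6 (R : realType) (A B T : completeNormedModType R[i])
    (mA : A -> A -> A) (mB : B -> B -> B) (mT : T -> T -> T)
    (S : Type) (ev : B -> S -> R[i]) (tens : A -> B -> T) :
  banach_algebra mA -> approx_semi_amenable mA -> has_central_mbai mA ->
  banach_function_algebra mB ev -> has_finsupp_mbai mB ev ->
  projective_tensor_product mA mB mT tens ->
  approx_semi_amenable mT.
Proof.
move=> hA asA [IA [leA [eA [dA aiA eA_central]]]] hB [IB [leB [uB [dB aiB uB_fin]]]] hT.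
move=> X l r D hX hD.
exact: (tensor_approx_semi_inner hA hB hT dA aiA eA_central dB aiB uB_fin hX hD asA).
Qed.
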